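(* Let $\theta$ be an eigenvalue of a distance-regular graph $\Gamma$ with valency $k$ and diameter $3$, and let $u_0,u_1,u_2,u_3$ be its standard sequence. Then the following are equivalent: (i) $u_2(\theta)=0$; (ii) $\theta=a_3$; (iii) $\theta=\frac{a_1+\sqrt{a_1^2+4k}}{2}$. Moreover, if (i)–(iii) hold, then $\theta$ is the second largest eigenvalue of $\Gamma$.
   Context: A connected graph $\Gamma$ of diameter $D$ is distance-regular if there are integers $b_i,c_i$ ($0\le i\le D$) such that for any two vertices $x,y$ at distance $i$, exactly $c_i$ neighbours of $y$ are at distance $i-1$ from $x$ and exactly $b_i$ neighbours of $y$ are at distance $i+1$ from $x$. Then $\Gamma$ is regular of valency $k=b_0$, and $a_i:=k-b_i-c_i$. The eigenvalues of $\Gamma$ are those of its adjacency matrix. For an eigenvalue $\theta$, the standard sequence $u_i=u_i(\theta)$ ($0\le i\le D$) is defined by $u_0=1$, $u_1=\theta/k$, and $c_iu_{i-1}+a_iu_i+b_iu_{i+1}=\theta u_i$ for $1\le i\le D-1$ (and these recurrences, with $b_D=0$, also hold for $i=D$ when $\theta$ is an eigenvalue). *)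

From HB Require Import structures.
From mathcomp Require Import all_boot all_order all_algebra.
Set Implicit Arguments. Unset Strict Implicit. Unset Printing Implicit Defensive.
Import Order.TTheory GRing.Theory Num.Theory.

Definition simple_graph n (e : rel 'I_n) : Prop :=
  irreflexive e /\ symmetric e.

Fixpoint ball n (e : rel 'I_n) (x : 'I_n) (m : nat) : {set 'I_n} :=
  match m with
  | 0 => [set x]
  | m'.+1 => ball e x m' :|: [set y | [exists z in ball e x m', e z y]]
  end.

(* graph distance (equals n when y is unreachable from x, which never
   happens for the connected graphs considered below) *)
Definition gdist n (e : rel 'I_n) (x y : 'I_n) : nat :=
  find (fun m => y \in ball e x m) (iota 0 n.+1).

Definition distance_regular n (e : rel 'I_n) (D : nat) (b c : nat -> nat) : Prop :=
  [/\ simple_graph e,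
      (forall x y : 'I_n, y \in ball e x D),
      (exists x y : 'I_n, y \notin ball e x D.-1),
      (forall (i : nat) (x y : 'I_n), 1 <= i <= D -> gdist e x y = i ->
          #|[set z | e y z & gdist e x z == i.-1]| = c i) &
      (forall (i : nat) (x y : 'I_n), i <= D -> gdist e x y = i ->
          #|[set z | e y z & gdist e x z == i.+1]| = b i)].

Local Open Scope ring_scope.

Definition adjmx (R : nzRingType) n (e : rel 'I_n) : 'M[R]_n :=
  \matrix_(i, j) (e i j)%:R.

(* valency k = b_0 and a_i = k - b_i - c_i, as elements of R *)
Definition aR (R : nzRingType) (b c : nat -> nat) (i : nat) : R :=
  (b 0%N)%:R - (b i)%:R - (c i)%:R.

(* standard sequence: u_0 = 1, u_1 = theta/k,
   c_i u_{i-1} + a_i u_i + b_i u_{i+1} = theta u_i for i >= 1 *)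
Fixpoint std_seq_aux (R : fieldType) (b c : nat -> nat) (theta : R) (i : nat)
  : R * R :=
  (* returns (u_i, u_{i+1}) *)
  match i with
  | 0 => (1, theta / (b 0%N)%:R)
  | i'.+1 =>
      let (p, q) := std_seq_aux b c theta i' in
      (q, ((theta - aR R b c i) * q - (c i)%:R * p) / (b i)%:R)
  end.

Definition std_seq (R : fieldType) (b c : nat -> nat) (theta : R) (i : nat) : R :=
  (std_seq_aux b c theta i).1.

From mathcomp Require Import all_boot all_order all_algebra.
From mathcomp Require Import ring lra zify.
Set Implicit Arguments.
Unset Strict Implicit.
Unset Printing Implicit Defensive.
Import Order.TTheory GRing.Theory Num.Theory.

(* Let v be a theta-eigenvector and x a vertex with v x != 0.  The sums s_i of
   v over the spheres of radius i around x obey the tridiagonal recurrence of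
   the intersection numbers; eliminating s_1, s_2, s_3 shows that theta is a
   root of a quartic [char_ip].  Since c_1 = 1, u_2(theta) is a nonzero
   multiple of theta^2 - a_1 theta - k, and [char_ip] shows that this
   quadratic vanishes at theta exactly when theta = a_3 >= 0, i.e. when theta
   is its positive root.  In that case [char_ip] factors as
   (x - a_3)(k - x)Q(x) with Q > 0 on (a_3, +oo), so the valency k is the only
   eigenvalue above theta. *)

Section Distance.
Variables (n : nat) (e : rel 'I_n).

Lemma ball_mono x m m' : m <= m' -> {subset ball e x m <= ball e x m'}.
Proof.
elim: m' => [|m' IH]; first by rewrite leqn0 => /eqP ->.
rewrite leq_eqVlt => /predU1P [-> //|lt_mm'] y y_in.
by rewrite /= inE (IH lt_mm' y y_in).
Qed.

Lemma ballS x m y :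
  (y \in ball e x m.+1) = (y \in ball e x m) || [exists z in ball e x m, e z y].
Proof. by rewrite /= !inE. Qed.

Lemma mem_ball x y m : m <= n -> (y \in ball e x m) = (gdist e x y <= m).
Proof.
move=> le_mn; rewrite /gdist; set s := iota 0 n.+1.
have nth_s i : i <= n -> nth 0 s i = i by move=> le_in; rewrite nth_iota.
apply/idP/idP => [y_in | le_dm].
  case: leqP => // /(before_find 0).
  by rewrite nth_s ?y_in.
have has_s : has (fun m => y \in ball e x m) s.
  by rewrite has_find size_iota ltnS (leq_trans le_dm).
have := nth_find 0 has_s.
by rewrite nth_s ?(leq_trans le_dm) // => /(ball_mono le_dm).
Qed.

Lemma gdist_eq0 x y : (gdist e x y == 0) = (y == x).
Proof. by rewrite -leqn0 -mem_ball // inE. Qed.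

Lemma gdist_xx x : gdist e x x = 0.
Proof. by apply/eqP; rewrite gdist_eq0. Qed.

End Distance.

Section DistanceRegular3.
Variables (n : nat) (e : rel 'I_n) (b c : nat -> nat).
Hypothesis DR : distance_regular e 3 b c.

Lemma drg_irr x : e x x = false.
Proof. by case: DR => -[irr _] _ _ _ _; apply: irr. Qed.

Lemma drg_sym x y : e x y = e y x.
Proof. by case: DR => -[_ sym] _ _ _ _; apply: sym. Qed.

Lemma three_le_n : 3 <= n.
Proof.
case: DR => _ in_ball3 [x [y]]; rewrite [_.-1]/= => y_far _ _.
move: (in_ball3 x y); rewrite ballS (negbTE y_far) /=.
case/existsP => z /andP [z_in ezy].
have x_in : x \in ball e x 2 by apply: (@ball_mono _ _ _ 0); rewrite ?inE.
have z_neq_x : z != x.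
  apply: contra y_far => /eqP z_x; rewrite ballS; apply/orP; right.
  by apply/existsP; exists z; rewrite ezy andbT z_x (@ball_mono _ _ _ 0) ?inE.
have y_neq_x : y != x by apply: contraNneq y_far => ->.
have y_neq_z : y != z by apply: contraNneq y_far => ->.
have uniq_xzy : uniq [:: x; z; y].
  by rewrite /= !inE negb_or (eq_sym x z) (eq_sym x y) (eq_sym z y) z_neq_x y_neq_x y_neq_z.
have := card_uniqP uniq_xzy => /= <-.
by rewrite -[n in _ <= n]card_ord max_card.
Qed.

Lemma gdist_le3 x y : gdist e x y <= 3.
Proof. by case: DR => _ in_ball3 _ _ _; rewrite -mem_ball ?three_le_n. Qed.

Lemma mem_ball_gdist x y : y \in ball e x (gdist e x y).
Proof. by rewrite mem_ball // (leq_trans (gdist_le3 x y) three_le_n). Qed.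

Lemma gdist_le_nbr x w z : e w z -> gdist e x z <= (gdist e x w).+1.
Proof.
move=> ewz; case: (ltnP (gdist e x w) 3) => [lt_w3 | ge_w3]; last first.
  by have := gdist_le3 x z; lia.
rewrite -mem_ball ?(leq_trans lt_w3 three_le_n) // ballS.
by apply/orP; right; apply/existsP; exists w; rewrite mem_ball_gdist.
Qed.

Lemma gdist_nbr w z : e w z -> gdist e w z = 1.
Proof.
move=> ewz; have := gdist_le_nbr w ewz; rewrite gdist_xx => le_1.
by apply/eqP; rewrite eqn_leq le_1 lt0n gdist_eq0; case: eqP ewz => [-> |]; rewrite ?drg_irr.
Qed.

Lemma gdist_pred x y m : gdist e x y = m.+1 -> exists2 z, gdist e x z = m & e z y.
Proof.
move=> d_xy; have le_mn : m <= n by have := gdist_le3 x y; have := three_le_n; lia.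
have := mem_ball_gdist x y; rewrite d_xy ballS mem_ball // d_xy ltnn /=.
case/existsP => z /andP [z_in ezy]; exists z => //.
have := gdist_le_nbr x ezy; move: z_in; rewrite mem_ball // d_xy; lia.
Qed.

Lemma geodesic3 : exists x z1 z2 y,
  [/\ e x z1, e z1 z2, e z2 y, gdist e x z2 = 2 & gdist e x y = 3].
Proof.
case: DR => _ _ [x [y y_far]] _ _.
have d_xy : gdist e x y = 3.
  by move: y_far; rewrite mem_ball ?(leq_trans _ three_le_n) //; have := gdist_le3 x y; lia.
have [z2 d_z2 ez2y] := gdist_pred d_xy.
have [z1 d_z1 ez1z2] := gdist_pred d_z2.
have [x' /eqP] := gdist_pred d_z1; rewrite gdist_eq0 => /eqP -> exz1.
by exists x, z1, z2, y.
Qed.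

Definition nbr_at x i w := #|[set z | e w z & gdist e x z == i]|.

Lemma nbr_at_pred x w j : 1 <= j <= 3 -> gdist e x w = j -> nbr_at x j.-1 w = c j.
Proof. by case: DR => _ _ _ DRc _; apply: DRc. Qed.

Lemma nbr_at_succ x w j : j <= 3 -> gdist e x w = j -> nbr_at x j.+1 w = b j.
Proof. by case: DR => _ _ _ _ DRb; apply: DRb. Qed.

Lemma nbr_at_far x i w :
  (i.+1 < gdist e x w) || ((gdist e x w).+1 < i) -> nbr_at x i w = 0.
Proof.
move=> far; apply/eqP; rewrite cards_eq0; apply/eqP/setP => z; rewrite !inE.
apply/andP => -[ewz /eqP d_z].
have := gdist_le_nbr x ewz; have := gdist_le_nbr x (etrans (drg_sym z w) ewz).
by move: far; rewrite d_z; lia.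
Qed.

Lemma nbr_at_gt0 x i w z : e w z -> gdist e x z = i -> 0 < nbr_at x i w.
Proof. by move=> ewz d_z; apply/card_gt0P; exists z; rewrite inE ewz d_z eqxx. Qed.

Lemma intersection_numbers3 : [/\ c 1 = 1, 0 < b 1, 0 < b 2, 0 < c 2 & 0 < c 3].
Proof.
have [x [z1 [z2 [y [exz1 ez1z2 ez2y d_z2 d_y]]]]] := geodesic3.
have d_z1 := gdist_nbr exz1.
split.
- rewrite -(nbr_at_pred (j := 1) _ d_z1) //; transitivity #|[set x]|; last exact: cards1.
  apply: eq_card => z; rewrite !inE gdist_eq0.
  by case: eqP => [-> | _]; rewrite ?andbF // andbT drg_sym.
- by rewrite -(nbr_at_succ _ d_z1) // (nbr_at_gt0 ez1z2 d_z2).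
- by rewrite -(nbr_at_succ _ d_z2) // (nbr_at_gt0 ez2y d_y).
- by rewrite -(nbr_at_pred _ d_z2) // (nbr_at_gt0 _ d_z1) // drg_sym.
- by rewrite -(nbr_at_pred _ d_y) // (nbr_at_gt0 _ d_z2) // drg_sym.
Qed.

Lemma b3_eq0 : b 3 = 0.
Proof.
have [x [_ [_ [y [_ _ _ _ d_y]]]]] := geodesic3.
rewrite -(nbr_at_succ _ d_y) //; apply/eqP; rewrite cards_eq0; apply/eqP/setP => z.
by rewrite !inE; case: eqP => [d_z|]; rewrite ?andbF //; have := gdist_le3 x z; rewrite d_z.
Qed.

Lemma big_by_gdist (R : Type) (idx : R) (op : Monoid.com_law idx) x
    (P : pred 'I_n) (F : 'I_n -> R) :
  \big[op/idx]_(z | P z) F z =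
  \big[op/idx]_(i < 4) \big[op/idx]_(z | P z && (gdist e x z == i)) F z.
Proof.
rewrite (partition_big (fun z => inord (gdist e x z) : 'I_4) predT) //.
apply: eq_bigr => i _; apply: eq_bigl => z.
by rewrite -val_eqE /= inordK // ltnS gdist_le3.
Qed.

Lemma valency w : #|[set z | e w z]| = b 0.
Proof.
rewrite -(nbr_at_succ _ (gdist_xx e w)) //; apply: eq_card => z; rewrite !inE.
by case ewz: (e w z); rewrite //= gdist_nbr.
Qed.

Lemma valency_split x w : b 0 = \sum_(i < 4) nbr_at x i w.
Proof.
rewrite -(valency w) -sum1_card (big_by_gdist _ x).
by apply: eq_bigr => i _; rewrite /nbr_at -sum1_card; apply: eq_bigl => z; rewrite !inE.
Qed.

Lemma valency_row x w j :
  1 <= j <= 3 -> gdist e x w = j -> b 0 = c j + nbr_at x j w + b j.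
Proof.
rewrite (valency_split x w) !big_ord_recr big_ord0 /= add0n.
case: j => [|[|[|[|//]]]] // _ d_w.
- rewrite (nbr_at_pred _ d_w) // (nbr_at_succ _ d_w) // (@nbr_at_far _ 3) ?d_w //.
  by rewrite addn0.
- rewrite (nbr_at_pred _ d_w) // (nbr_at_succ _ d_w) // (@nbr_at_far _ 0) ?d_w //.
- rewrite (nbr_at_pred _ d_w) // (@nbr_at_far _ 0) ?d_w // (@nbr_at_far _ 1) ?d_w //.
  by rewrite b3_eq0 !add0n addn0.
Qed.

End DistanceRegular3.

Local Open Scope ring_scope.

Lemma sqr_sub_eq0_ge0 (R : rcfType) (a k x : R) : 0 < k ->
  (x ^+ 2 - a * x - k = 0 /\ 0 <= x) <-> x = (a + Num.sqrt (a ^+ 2 + 4 * k)) / 2.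
Proof.
move=> k_gt0; set s := Num.sqrt _.
have s_ge0 : 0 <= s := sqrtr_ge0 _.
have s2 : s ^+ 2 = a ^+ 2 + 4 * k by rewrite sqr_sqrtr //; nra.
have a_lt_s : a < s by nra.
split => [[x_root x_ge0] | ->]; last by split; [rewrite mulrDl; nra | nra].
have : (2 * x - a - s) * (2 * x - a + s) = 0 by nra.
by move/eqP; rewrite mulf_eq0 => /orP [] /eqP; lra.
Qed.

Section IntersectionPolynomial.
Variables (R : idomainType) (k a1 a2 a3 b1 b2 c2 c3 : R).

(* k b_1 u_2(x) when c_1 = 1 *)
Definition quad_u (x : R) := x ^+ 2 - a1 * x - k.

Definition char_ip (x : R) :=
  c3 * b2 * quad_u x + (a3 - x) * ((x - a2) * quad_u x - c2 * b1 * x).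

Lemma char_ip_root (x s0 s1 s2 s3 : R) : s0 != 0 ->
  x * s0 = s1 -> x * s1 = k * s0 + a1 * s1 + c2 * s2 ->
  x * s2 = b1 * s1 + a2 * s2 + c3 * s3 -> x * s3 = b2 * s2 + a3 * s3 ->
  char_ip x = 0.
Proof.
move=> s0_neq0 e0 e1 e2 e3; subst s1.
have u_s2 : c2 * s2 = quad_u x * s0.
  by transitivity (x * (x * s0) - k * s0 - a1 * (x * s0)); [rewrite e1 | rewrite /quad_u]; ring.
have u_s3 : c2 * c3 * s3 = ((x - a2) * quad_u x - c2 * b1 * x) * s0.
  transitivity ((x - a2) * (c2 * s2) - c2 * b1 * (x * s0)); last by rewrite u_s2; ring.
  by transitivity (c2 * (x * s2 - b1 * (x * s0) - a2 * s2)); [rewrite e2 | ]; ring.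
have : s0 * char_ip x = c2 * c3 * (b2 * s2 + a3 * s3 - x * s3).
  transitivity (c3 * b2 * (quad_u x * s0)
                + (a3 - x) * (((x - a2) * quad_u x - c2 * b1 * x) * s0)).
    by rewrite /char_ip; ring.
  by rewrite -u_s2 -u_s3; ring.
by rewrite e3 subrr mulr0 => /eqP; rewrite mulf_eq0 (negbTE s0_neq0) => /eqP.
Qed.

End IntersectionPolynomial.

Record drg3_array (R : numDomainType) (k a1 a2 a3 b1 b2 c2 c3 : R) : Prop :=
  DRG3Array {
    drg3_row1 : k = 1 + a1 + b1;
    drg3_row2 : k = c2 + a2 + b2;
    drg3_row3 : k = c3 + a3;
    drg3_b1_gt0 : 0 < b1;
    drg3_b2_gt0 : 0 < b2;
    drg3_c2_gt0 : 0 < c2;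
    drg3_c3_gt0 : 0 < c3;
    drg3_a3_ge0 : 0 <= a3 }.

Section IntersectionPolynomialRoots.
Variables (R : realFieldType) (k a1 a2 a3 b1 b2 c2 c3 : R).
Hypothesis A : drg3_array k a1 a2 a3 b1 b2 c2 c3.

Local Notation U := (quad_u k a1).
Local Notation F := (char_ip k a1 a2 a3 b1 b2 c2 c3).

Lemma char_ip_quad_u x : F x = 0 -> (U x = 0 <-> x = a3).
Proof.
case: A => _ _ k3 b1_gt0 b2_gt0 c2_gt0 c3_gt0 a3_ge0 Fx.
split => [Ux | x_a3].
  have : F x = - ((a3 - x) * (c2 * b1 * x)) by rewrite /char_ip Ux; ring.
  rewrite Fx => /esym/eqP; rewrite oppr_eq0 !mulf_eq0 (gt_eqF c2_gt0) (gt_eqF b1_gt0) /=.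
  case/orP => /eqP; first lra.
  by move=> x0; move: Ux; rewrite /quad_u x0; lra.
have : c3 * b2 * U a3 = 0 by rewrite -Fx x_a3 /char_ip subrr mul0r addr0.
by move/eqP; rewrite !mulf_eq0 (gt_eqF c3_gt0) (gt_eqF b2_gt0) /= x_a3 => /eqP.
Qed.

Hypothesis Ua3 : U a3 = 0.

Lemma a3_gt0_a1_lt_a3 : 0 < a3 /\ a1 < a3.
Proof.
case: A => _ _ k3 _ _ _ c3_gt0 a3_ge0.
have k_eq : a3 * (a3 - a1) = k.
  by apply/eqP; rewrite -subr_eq0 -Ua3 /quad_u; apply/eqP; ring.
have a3_gt0 : 0 < a3.
  rewrite lt_neqAle a3_ge0 andbT; apply/eqP => a3_0.
  by move: k_eq; rewrite -a3_0 mul0r; lra.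
by split=> //; rewrite -subr_gt0 -(pmulr_rgt0 _ a3_gt0) k_eq; lra.
Qed.

Lemma char_ip_factor x : F x = (x - a3) * (k - x) *
  (b2 * (2 * a3 - a1) + c2 * (a3 + 1) + (x - a3) * (x + a3 + b2 + c2 - a1)).
Proof.
case: A => k1 k2 k3 _ _ _ _ _.
have -> : b1 = k - 1 - a1 by lra.
have -> : a2 = k - c2 - b2 by lra.
have -> : c3 = k - a3 by lra.
have -> : k = a3 ^+ 2 - a1 * a3 by move: Ua3; rewrite /quad_u; lra.
by rewrite /char_ip /quad_u; ring.
Qed.

Lemma char_ip_root_gt x : a3 < x -> F x = 0 -> x = k.
Proof.
case: A => _ _ _ _ b2_gt0 c2_gt0 _ _ lt_a3x; have [a3_gt0 a1_lt_a3] := a3_gt0_a1_lt_a3.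
have Q_gt0 : 0 < b2 * (2 * a3 - a1) + c2 * (a3 + 1) + (x - a3) * (x + a3 + b2 + c2 - a1).
  by rewrite !addr_gt0 // mulr_gt0 //; lra.
rewrite char_ip_factor => /eqP; rewrite !mulf_eq0 (gt_eqF Q_gt0) orbF.
by case/orP => /eqP; lra.
Qed.

End IntersectionPolynomialRoots.

Lemma sum_nat_of_bool (R : nzSemiRingType) (T : finType) (P a : pred T) :
  \sum_(z | P z) ((a z)%:R : R) = #|[set z | a z & P z]|%:R.
Proof.
rewrite (eq_bigr (fun z => if a z then 1 else 0)); last by move=> z _; case: (a z).
by rewrite -big_mkcondr sumr_const; congr (_ *+ _); apply: eq_card => z; rewrite !inE andbC.
Qed.

Section Spheres.
Variables (n : nat) (e : rel 'I_n) (b c : nat -> nat).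
Hypothesis DR : distance_regular e 3 b c.
Local Notation nbr_at := (nbr_at e).

Lemma aR_nbr_at (R : nzRingType) x w j :
  (1 <= j <= 3)%N -> gdist e x w = j -> aR R b c j = (nbr_at x j w)%:R.
Proof.
move=> j_bnd d_w; rewrite /aR (valency_row DR j_bnd d_w) !natrD addrK.
by rewrite [_%:R + _]addrC addrK.
Qed.

Lemma aR3_ge0 (R : numDomainType) : 0 <= aR R b c 3.
Proof.
have [x [_ [_ [y [_ _ _ _ d_y]]]]] := geodesic3 DR.
by rewrite (aR_nbr_at _ _ d_y).
Qed.

(* c_0 is not determined by the graph, so the (0, 0) entry is 0 rather than
   aR 0. *)
Definition imx (R : nzRingType) (i j : nat) : R :=
  if i == j.+1 then (b j)%:R else if j == i.+1 then (c j)%:R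
  else if (i == j) && (0 < j)%N then aR R b c j else 0.

Lemma nbr_at_imx (R : nzRingType) x w i :
  (i < 4)%N -> (nbr_at x i w)%:R = imx R i (gdist e x w).
Proof.
move=> lt_i4; have d_le3 := gdist_le3 DR x w; rewrite /imx.
case: eqP => [-> | ne_i]; first by rewrite (nbr_at_succ DR).
case: eqP => [d_w | ne_d].
  by rewrite -[i]/(i.+1.-1) -d_w (nbr_at_pred DR) //; lia.
case: eqP => [d_i | ne_id] /=; last by rewrite (nbr_at_far DR) //; lia.
rewrite -d_i; case: posnP => [i_0 | i_gt0]; last by rewrite (@aR_nbr_at _ x w) //; lia.
suff -> : nbr_at x i w = 0%N by [].
apply/eqP; rewrite cards_eq0; apply/eqP/setP => z; rewrite !inE i_0.
move/esym/eqP: d_i; rewrite i_0 gdist_eq0 => /eqP ->.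
by rewrite gdist_eq0; case: eqP => [-> |]; rewrite ?(drg_irr DR) ?andbF.
Qed.

Definition sphere_sum (R : nzRingType) x (v : 'rV[R]_n) i :=
  \sum_(z | gdist e x z == i) v 0 z.

Lemma sphere_sum0 (R : nzRingType) x (v : 'rV[R]_n) : sphere_sum x v 0 = v 0 x.
Proof. by rewrite /sphere_sum (big_pred1 x) // => z; rewrite /= gdist_eq0. Qed.

Lemma sphere_sum_eigen (R : comNzRingType) x (v : 'rV[R]_n) eta :
  v *m adjmx R e = eta *: v -> forall i, (i < 4)%N ->
  eta * sphere_sum x v i = \sum_(j < 4) imx R i j * sphere_sum x v j.
Proof.
move=> v_eigen i lt_i4; rewrite /sphere_sum mulr_sumr.
have eigen_z z : eta * v 0 z = (v *m adjmx R e) 0 z by rewrite v_eigen mxE.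
under eq_bigr => z _ do rewrite eigen_z mxE.
rewrite exchange_big /= (big_by_gdist DR _ x) /=.
apply: eq_bigr => j _; rewrite mulr_sumr; apply: eq_bigr => w /eqP d_w.
under eq_bigr => z _ do rewrite mxE.
by rewrite -mulr_sumr sum_nat_of_bool -/(nbr_at x i w) nbr_at_imx // d_w mulrC.
Qed.

Lemma eigenvalue_char_ip (R : fieldType) eta : eigenvalue (adjmx R e) eta ->
  char_ip (b 0)%:R (aR R b c 1) (aR R b c 2) (aR R b c 3)
          (b 1)%:R (b 2)%:R (c 2)%:R (c 3)%:R eta = 0.
Proof.
case/eigenvalueP => v v_eigen v_neq0.
have [x vx_neq0] : exists x, v 0 x != 0.
  apply/existsP; apply: contraNT v_neq0 => /existsPn v_0; apply/eqP/rowP => j.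
  by rewrite !mxE; apply/eqP; rewrite -[_ == _]negbK v_0.
have [c1 _ _ _ _] := intersection_numbers3 DR.
have rec := sphere_sum_eigen x v_eigen.
apply: (char_ip_root (s0 := sphere_sum x v 0) (s1 := sphere_sum x v 1)
                     (s2 := sphere_sum x v 2) (s3 := sphere_sum x v 3)).
- by rewrite sphere_sum0.
all: rewrite rec //= !big_ord_recr big_ord0 /= /imx /= ?c1; ring.
Qed.

Lemma eigenvalue_valency (R : fieldType) : eigenvalue (adjmx R e) (b 0)%:R.
Proof.
apply/eigenvalueP; exists (const_mx 1).
  apply/rowP => j; rewrite !mxE; under eq_bigr do rewrite !mxE mul1r (drg_sym DR).
  rewrite sum_nat_of_bool -(valency DR j) mulr1; congr _%:R.
  by apply: eq_card => z; rewrite !inE andbT.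
apply/negP => /eqP/rowP/(_ (Ordinal (leq_trans (isT : 0 < 3)%N (three_le_n DR)))).
by rewrite !mxE => /eqP; rewrite oner_eq0.
Qed.

Lemma drg3_array_intersection (R : numDomainType) :
  drg3_array (b 0)%:R (aR R b c 1) (aR R b c 2) (aR R b c 3)
             (b 1)%:R (b 2)%:R (c 2)%:R (c 3)%:R.
Proof.
have [c1 b1_gt0 b2_gt0 c2_gt0 c3_gt0] := intersection_numbers3 DR.
split; rewrite ?ltr0n ?aR3_ge0 // /aR ?c1 ?(b3_eq0 DR); ring.
Qed.

End Spheres.

Lemma std_seq2_eq0 (R : fieldType) (b c : nat -> nat) theta :
  c 1 = 1%N -> (b 0)%:R != 0 :> R -> (b 1)%:R != 0 :> R ->
  std_seq b c theta 2 = 0 <-> quad_u (b 0)%:R (aR R b c 1) theta = 0.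
Proof.
move=> c1 b0_neq0 b1_neq0.
have -> : std_seq b c theta 2 = quad_u (b 0)%:R (aR R b c 1) theta / ((b 0)%:R * (b 1)%:R).
  by rewrite /std_seq /= c1 /quad_u; field; rewrite b0_neq0 b1_neq0.
split => [/eqP | ->]; last by rewrite mul0r.
by rewrite mulf_eq0 invr_eq0 mulf_eq0 (negbTE b0_neq0) (negbTE b1_neq0) /= orbF => /eqP.
Qed.

Theorem theorem7 (R : rcfType) (n : nat) (e : rel 'I_n) (b c : nat -> nat)
  (theta : R) :
  distance_regular e 3 b c ->
  eigenvalue (adjmx R e) theta ->
  (std_seq b c theta 2 = 0 <-> theta = aR R b c 3) /\
  (theta = aR R b c 3 <->
     theta = (aR R b c 1 + Num.sqrt (aR R b c 1 ^+ 2 + 4 * (b 0%N)%:R)) / 2) /\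
  (std_seq b c theta 2 = 0 ->
     exists2 eta : R, eigenvalue (adjmx R e) eta & theta < eta /\
       forall eta' : R, eigenvalue (adjmx R e) eta' -> theta < eta' -> eta' = eta).
Proof.
move=> DR eig_theta.
have A := drg3_array_intersection DR R.
have [c1 b1_gt0 _ _ _] := intersection_numbers3 DR.
have [_ _ k3 _ _ _ c3_gt0 a3_ge0] := A.
have k_gt0 : 0 < (b 0)%:R :> R by lra.
have quad_a3 := char_ip_quad_u A (eigenvalue_char_ip DR eig_theta).
have b1_neq0 : (b 1)%:R != 0 :> R by rewrite pnatr_eq0 -lt0n.
have u2_quad := std_seq2_eq0 theta c1 (lt0r_neq0 k_gt0) b1_neq0.
split; first by rewrite u2_quad.
split.
  rewrite -sqr_sub_eq0_ge0 // -/(quad_u _ _ theta) quad_a3.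
  by split => [-> | []].
move=> /u2_quad U_theta; have theta_a3 := quad_a3.1 U_theta.
exists (b 0)%:R; first exact: (eigenvalue_valency DR R).
split=> [| eta eig_eta lt_theta_eta]; first lra.
by apply: (char_ip_root_gt A _ _ (eigenvalue_char_ip DR eig_eta)); rewrite -theta_a3.
Qed.
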